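(* Let $P$ be a convex polygon, let $\mathcal{R}$ be the smallest axis-parallel rectangle containing $P$, with side lengths $L\ge W>0$, and let $r=\frac14\sqrt{L^2+4W^2}$. Suppose that $P$ has three vertices forming a triangle such that one of these vertices coincides with a corner of $\mathcal{R}$ and the other two lie respectively on the two sides of $\mathcal{R}$ not incident to that corner. Then $r\le 2\,r_{opt}(P)$.
   Context: For a compact set $X\subset\mathbb{R}^2$, $r_{opt}(X)$ denotes the minimum $r$ such that two closed disks of radius $r$ have union containing $X$. The number $r$ is the radius of the two congruent disks circumscribing the two halves $\frac L2\times W$ of $\mathcal{R}$. *)

From HB Require Import structures.
From mathcomp Require Import all_boot all_order all_algebra.
From mathcomp Require Import all_classical all_reals.
Set Implicit Arguments. Unset Strict Implicit. Unset Printing Implicit Defensive.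
Import Order.TTheory GRing.Theory Num.Theory.
Local Open Scope ring_scope.
Local Open Scope classical_set_scope.

Section Defs.
Variable R : realType.
Definition pt := (R * R)%type.

Definition conv_hull (n : nat) (v : 'I_n -> pt) : set pt :=
  [set p | exists w : 'I_n -> R,
     (forall i, 0 <= w i) /\ \sum_(i < n) w i = 1 /\
     p.1 = \sum_(i < n) w i * (v i).1 /\ p.2 = \sum_(i < n) w i * (v i).2].

Definition is_vertex (P : set pt) (x : pt) : Prop :=
  P x /\ forall y z (t : R), P y -> P z -> 0 < t < 1 ->
    x = (t * y.1 + (1 - t) * z.1, t * y.2 + (1 - t) * z.2) -> y = z.

Definition rect (a b c d : R) : set pt :=
  [set p | a <= p.1 <= b /\ c <= p.2 <= d].

Definition is_bbox (P : set pt) (a b c d : R) : Prop :=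
  P `<=` rect a b c d /\
  forall a' b' c' d', P `<=` rect a' b' c' d' -> rect a b c d `<=` rect a' b' c' d'.

Definition disk (c : pt) (r : R) : set pt :=
  [set p | (p.1 - c.1) ^+ 2 + (p.2 - c.2) ^+ 2 <= r ^+ 2].

Definition r_opt (X : set pt) : R :=
  inf [set r : R | 0 <= r /\ exists c1 c2 : pt, X `<=` disk c1 r `|` disk c2 r].

Definition noncollinear (p q s : pt) : Prop :=
  (q.1 - p.1) * (s.2 - p.2) - (q.2 - p.2) * (s.1 - p.1) != 0.
End Defs.

From HB Require Import structures.
From mathcomp Require Import all_boot all_order all_algebra.
From mathcomp Require Import all_classical all_reals.
From mathcomp Require Import ring lra.
Import Order.TTheory GRing.Theory Num.Theory.
Local Open Scope ring_scope.
Local Open Scope classical_set_scope.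

(* The corner p1, the vertices p2, p3 on the opposite sides, and the midpoints
   of p1p2 and p1p3 all lie in P.  If two disks of radius r cover P, then two
   of p1, p2, p3 lie in a common disk, so one of the sides of the triangle
   has length at most 2r; and a midpoint shares a disk with one endpoint of its
   segment unless the endpoints share one, so |p1p2| and |p1p3| are at most 4r.
   In coordinates relative to the corner these three bounds force
   L^2 + 4 W^2 <= 64 r^2. *)

Section CornerInequality.
Context {R : realFieldType}.

(* X, Y: sides of the bounding box; p2 - p1 = (X, s), p3 - p1 = (t, Y). *)
Lemma corner_triangle_ineq {X Y s t e : R} :
  0 <= s <= Y -> Y <= X -> 0 <= t <= X ->
  X ^+ 2 + s ^+ 2 <= 4 * e -> t ^+ 2 + Y ^+ 2 <= 4 * e ->
  [\/ X ^+ 2 + s ^+ 2 <= e, t ^+ 2 + Y ^+ 2 <= e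
    | (X - t) ^+ 2 + (s - Y) ^+ 2 <= e] ->
  X ^+ 2 + 4 * Y ^+ 2 <= 16 * e.
Proof.
move=> /andP[s_ge0 sY] YX /andP[t_ge0 tX] d12 d13.
have Y2X2 : Y ^+ 2 <= X ^+ 2 by rewrite ler_sqr ?nnegrE; lra.
have s2_ge0 := sqr_ge0 s; have t2_ge0 := sqr_ge0 t.
case=> [d12e|d13e|d23e]; first lra; first lra.
(* 3/10 (t - 2X/3)^2 + 3/10 (s - 2Y/3)^2 + (5 X^2 - 4 Y^2)/48 is the gap. *)
have weighted : (X ^+ 2 + 4 * Y ^+ 2) / 16 <= (X ^+ 2 + s ^+ 2) / 10
    + (t ^+ 2 + Y ^+ 2) / 10 + ((X - t) ^+ 2 + (s - Y) ^+ 2) / 5.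
  have := sqr_ge0 (t - 2 * X / 3); have := sqr_ge0 (s - 2 * Y / 3); nra.
lra.
Qed.

Lemma corner_triangle_ineq_sym {X Y s t e L W : R} :
  0 <= s <= Y -> 0 <= t <= X ->
  (L = X /\ W = Y) \/ (L = Y /\ W = X) -> W <= L ->
  X ^+ 2 + s ^+ 2 <= 4 * e -> t ^+ 2 + Y ^+ 2 <= 4 * e ->
  [\/ X ^+ 2 + s ^+ 2 <= e, t ^+ 2 + Y ^+ 2 <= e
    | (X - t) ^+ 2 + (s - Y) ^+ 2 <= e] ->
  L ^+ 2 + 4 * W ^+ 2 <= 16 * e.
Proof.
move=> hs ht [[eL eW]|[eL eW]] WL d12 d13 d; subst L W.
  exact: corner_triangle_ineq hs WL ht d12 d13 d.
have d23C : (Y - s) ^+ 2 + (t - X) ^+ 2 = (X - t) ^+ 2 + (s - Y) ^+ 2.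
  by rewrite addrC -[(t - X) ^+ 2]sqrrN -[(Y - s) ^+ 2]sqrrN !opprB.
apply: (corner_triangle_ineq ht WL hs); rewrite 1?d23C 1?[Y ^+ 2 + _]addrC
  1?[s ^+ 2 + _]addrC //.
by case: d => d; [apply: Or32 | apply: Or31 | apply: Or33].
Qed.

End CornerInequality.

Section CornerOffsets.
Context {R : realDomainType}.

Lemma sqrrB_norm (u w : R) : 0 <= u * w -> (u - w) ^+ 2 = (`|u| - `|w|) ^+ 2.
Proof.
move=> uw_ge0; rewrite !sqrrB -normrM ger0_norm //.
by rewrite !real_normK ?num_real.
Qed.

Lemma corner_offsets {a b x0 x1 x2 : R} :
  (x0 = a /\ x1 = b) \/ (x0 = b /\ x1 = a) -> a <= x2 <= b ->
  [/\ 0 <= (x1 - x0) * (x2 - x0), `|x2 - x0| <= `|x1 - x0| & `|x1 - x0| = b - a].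
Proof.
move=> [[-> ->]|[-> ->]] /andP[ax2 x2b]; have ab : a <= b := le_trans ax2 x2b.
  by rewrite !ger0_norm ?subr_ge0 //; split; nra.
by rewrite !ler0_norm ?subr_le0 //; split; nra.
Qed.

End CornerOffsets.

Section Plane.
Context {R : realType}.
Implicit Types (p q s c : pt R) (r : R).

Definition sqdist p q : R := (p.1 - q.1) ^+ 2 + (p.2 - q.2) ^+ 2.

Definition midpoint p q : pt R := ((p.1 + q.1) / 2, (p.2 + q.2) / 2).

Lemma sqdistC p q : sqdist p q = sqdist q p.
Proof. by rewrite /sqdist -sqrrN opprB -[(p.2 - _) ^+ 2]sqrrN opprB. Qed.

Lemma sqdist_midpointl p q : sqdist p (midpoint p q) = sqdist p q / 4.
Proof. by rewrite /sqdist /=; field; rewrite ?pnatr_eq0. Qed.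

Lemma sqdist_midpointr p q : sqdist q (midpoint p q) = sqdist p q / 4.
Proof. by rewrite /sqdist /=; field; rewrite ?pnatr_eq0. Qed.

Lemma sqdist_disk {c r p q} : disk c r p -> disk c r q -> sqdist p q <= 4 * r ^+ 2.
Proof.
rewrite /disk /sqdist /= => hp hq.
have := sqr_ge0 ((p.1 - c.1) + (q.1 - c.1)).
have := sqr_ge0 ((p.2 - c.2) + (q.2 - c.2)).
nra.
Qed.

Lemma conv_hull_midpoint {n} {v : 'I_n -> pt R} {p q} :
  conv_hull v p -> conv_hull v q -> conv_hull v (midpoint p q).
Proof.
move=> [w [w_ge0 [w1 [px py]]]] [w' [w'_ge0 [w'1 [qx qy]]]].
exists (fun i => (w i + w' i) / 2); split.
  by move=> i; apply: divr_ge0; [apply: addr_ge0 | ].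
split; first by rewrite -mulr_suml big_split /= w1 w'1; field.
rewrite /midpoint /= px py qx qy -!big_split /= !mulr_suml.
by split; apply: eq_bigr => i _; field.
Qed.

Lemma rect_sub_disk_corner {a b c d : R} : a <= b -> c <= d ->
  rect a b c d `<=` disk (a, c) ((b - a) + (d - c)).
Proof.
by move=> ab cd p [/andP[ap pb] /andP[cp pd]]; rewrite /disk /=; nra.
Qed.

Section TwoDisks.
Context {c1 c2 : pt R} {r : R}.
Local Notation cover := (disk c1 r `|` disk c2 r).

Lemma two_disks_pigeonhole {p q s} : cover p -> cover q -> cover s ->
  [\/ sqdist p q <= 4 * r ^+ 2, sqdist p s <= 4 * r ^+ 2
    | sqdist q s <= 4 * r ^+ 2].
Proof.
by move=> [hp|hp] [hq|hq] [hs|hs];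
  first [ by apply: Or31; exact: sqdist_disk hp hq
        | by apply: Or32; exact: sqdist_disk hp hs
        | by apply: Or33; exact: sqdist_disk hq hs ].
Qed.

(* The midpoint shares a disk with an endpoint, unless both endpoints share one. *)
Lemma sqdist_midpoint_cover {p q} : cover p -> cover q -> cover (midpoint p q) ->
  sqdist p q <= 4 * (4 * r ^+ 2).
Proof.
move=> hp hq hm; have := sqr_ge0 r.
by case: (two_disks_pigeonhole hp hq hm);
  rewrite ?sqdist_midpointl ?sqdist_midpointr => d; lra.
Qed.

Lemma corner_cover_bound {p1 p2 p3} {L W : R} :
  0 <= (p2.1 - p1.1) * (p3.1 - p1.1) -> `|p3.1 - p1.1| <= `|p2.1 - p1.1| ->
  0 <= (p3.2 - p1.2) * (p2.2 - p1.2) -> `|p2.2 - p1.2| <= `|p3.2 - p1.2| ->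
  (L = `|p2.1 - p1.1| /\ W = `|p3.2 - p1.2|) \/
    (L = `|p3.2 - p1.2| /\ W = `|p2.1 - p1.1|) -> W <= L ->
  cover p1 -> cover p2 -> cover p3 ->
  cover (midpoint p1 p2) -> cover (midpoint p1 p3) ->
  L ^+ 2 + 4 * W ^+ 2 <= 16 * (4 * r ^+ 2).
Proof.
move=> x_sign tX y_sign sY LW WL h1 h2 h3 h12 h13.
have normK (u : R) : `|u| ^+ 2 = u ^+ 2 := real_normK (num_real u).
have d12 : sqdist p1 p2 = `|p2.1 - p1.1| ^+ 2 + `|p2.2 - p1.2| ^+ 2.
  by rewrite sqdistC /sqdist !normK.
have d13 : sqdist p1 p3 = `|p3.1 - p1.1| ^+ 2 + `|p3.2 - p1.2| ^+ 2.
  by rewrite sqdistC /sqdist !normK.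
have d23 : sqdist p2 p3 = (`|p2.1 - p1.1| - `|p3.1 - p1.1|) ^+ 2
    + (`|p2.2 - p1.2| - `|p3.2 - p1.2|) ^+ 2.
  rewrite -!sqrrB_norm ?[_ * (p3.2 - _)]mulrC // /sqdist.
  by congr (_ ^+ 2 + _ ^+ 2); rewrite opprB addrA subrK.
have s_range : 0 <= `|p2.2 - p1.2| <= `|p3.2 - p1.2| by rewrite normr_ge0.
have t_range : 0 <= `|p3.1 - p1.1| <= `|p2.1 - p1.1| by rewrite normr_ge0.
apply: (corner_triangle_ineq_sym s_range t_range LW WL).
- by rewrite -d12; exact: sqdist_midpoint_cover h1 h2 h12.
- by rewrite -d13; exact: sqdist_midpoint_cover h1 h3 h13.
- by rewrite -d12 -d13 -d23; exact: two_disks_pigeonhole h1 h2 h3.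
Qed.

End TwoDisks.
End Plane.

Theorem lemma2 (R : realType) (n : nat) (v : 'I_n -> pt R)
  (a b c d L W : R) (p1 p2 p3 : pt R) :
  is_bbox (conv_hull v) a b c d ->
  ((L = b - a /\ W = d - c) \/ (L = d - c /\ W = b - a)) ->
  W <= L -> 0 < W ->
  is_vertex (conv_hull v) p1 -> is_vertex (conv_hull v) p2 ->
  is_vertex (conv_hull v) p3 -> noncollinear p1 p2 p3 ->
  ((p1.1 = a /\ p2.1 = b) \/ (p1.1 = b /\ p2.1 = a)) ->
  ((p1.2 = c /\ p3.2 = d) \/ (p1.2 = d /\ p3.2 = c)) ->
  Num.sqrt (L ^+ 2 + 4 * W ^+ 2) / 4 <= 2 * r_opt (conv_hull v).
Proof.
move=> [hull_rect _] LW WL _ [hp1 _] [hp2 _] [hp3 _] _ hx hy.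
have [p3x _] := hull_rect _ hp3.
have [_ p2y] := hull_rect _ hp2.
have [x_sign tX X_eq] := corner_offsets hx p3x.
have [y_sign sY Y_eq] := corner_offsets hy p2y.
rewrite -X_eq -Y_eq in LW.
suff : Num.sqrt (L ^+ 2 + 4 * W ^+ 2) / 8 <= r_opt (conv_hull v) by lra.
apply: lb_le_inf.
  exists ((b - a) + (d - c)); split; first by rewrite -X_eq -Y_eq addr_ge0.
  exists (a, c), (a, c) => p /hull_rect hp; left.
  by apply: rect_sub_disk_corner hp; rewrite -subr_ge0 -?X_eq -?Y_eq.
move=> r [r_ge0 [c1 [c2 cover]]].
have bound := corner_cover_bound x_sign tX y_sign sY LW WL (cover _ hp1) (cover _ hp2)
  (cover _ hp3) (cover _ (conv_hull_midpoint hp1 hp2))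
  (cover _ (conv_hull_midpoint hp1 hp3)).
have : Num.sqrt (L ^+ 2 + 4 * W ^+ 2) <= Num.sqrt ((8 * r) ^+ 2).
  by apply: ler_wsqrtr; lra.
by rewrite sqrtr_sqr ger0_norm; lra.
Qed.
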